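(* Let $N_o>0$, $\alpha>2$ and $\eta(d)=\frac{1}{(1+d)^\alpha}$. (a) Given $C,D>0$ and a positive integer $m$, there exist $t,r\in\mathbb{R}^2$ and a set $T\subset\mathbb{R}^2$ with $m$ elements such that $(t,r,T)$ satisfies DC$(C,D)$ and, for every $P>0$, $$\mathrm{SINR}(t,r,T,P,N_o,\eta)\le\frac17\Big(\frac{1+2C(2+D)}{1+C}\Big)^\alpha\Big(\sum_{k=1}^{\lfloor\sqrt{m/7}-2\rfloor}\frac{1}{k^{\alpha-1}}\Big)^{-1}.$$ (b) If $\beta>0$ and $\frac17\Big(\frac{1+2C(2+D)}{1+C}\Big)^\alpha\Big(\sum_{k=1}^\infty\frac{1}{k^{\alpha-1}}\Big)^{-1}<\beta$, then $(C,D)$ does not ensure SINR$_\beta$; i.e., there exists $(t,r,T)$ satisfying DC$(C,D)$ such that for all $P>0$, $\mathrm{SINR}(t,r,T,P,N_o,\eta)<\beta$. (c) If $\beta>0$ and $\frac17\Big(\sum_{k=1}^\infty\frac{1}{k^{\alpha-1}}\Big)^{-1}<\beta$, then all sufficiently small $C,D>0$ do not ensure SINR$_\beta$.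
   Context: $\mathrm{SINR}(t,r,T,P,N_o,\eta)=\dfrac{P\eta(\|t-r\|)}{N_o+\sum_{t'\in T}P\eta(\|t'-r\|)}$ for $t,r\in\mathbb{R}^2$, $T$ a finite subset of $\mathbb{R}^2$, $P>0$. $(t,r,T)$ satisfies DC$(C,D)$ if $\|t-r\|\le C$ and $\|t'-t''\|\ge C(2+D)$ for all distinct $t',t''\in T\cup\{t\}$. The pair $(C,D)$ ensures SINR$_\beta$ if there exists $P>0$ such that every triple $(t,r,T)$ satisfying DC$(C,D)$ has $\mathrm{SINR}\ge\beta$. *)

From Stdlib Require Import Reals Lra List ZArith.
From Coquelicot Require Import Coquelicot.
Open Scope R_scope.

Definition pt := (R * R)%type.
Definition dist2 (p q : pt) : R :=
  sqrt ((fst p - fst q) ^ 2 + (snd p - snd q) ^ 2).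

Definition sumR (l : list R) : R := fold_right Rplus 0 l.

(* A finite subset T of R^2 is represented by a duplicate-free list. *)
Definition SINR (t r : pt) (T : list pt) (P No : R) (eta : R -> R) : R :=
  P * eta (dist2 t r) / (No + sumR (map (fun t' => P * eta (dist2 t' r)) T)).

Definition DC (C D : R) (t r : pt) (T : list pt) : Prop :=
  dist2 t r <= C /\
  forall a b, In a (t :: T) -> In b (t :: T) -> a <> b -> C * (2 + D) <= dist2 a b.

Definition ensures_SINR (C D beta No : R) (eta : R -> R) : Prop :=
  exists P, 0 < P /\
    forall (t r : pt) (T : list pt), NoDup T -> DC C D t r T ->
      beta <= SINR t r T P No eta.

Definition eta_pl (alpha d : R) : R := / Rpower (1 + d) alpha.

Definition zeta_part (alpha : R) (K : nat) : R :=
  sumR (map (fun k => / Rpower (INR k) (alpha - 1)) (seq 1 K)).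

Definition zeta_inf (alpha : R) : R :=
  Series (fun n => / Rpower (INR (S n)) (alpha - 1)).

(* floor(sqrt(m/7) - 2), truncated at 0 (empty sum when negative) *)
Definition Kbound (m : nat) : nat := Z.to_nat (Int_part (sqrt (INR m / 7) - 2)).

From Stdlib Require Import Reals List Lra Lia ZArith FinFun Classical.
From Coquelicot Require Import Coquelicot.
Open Scope R_scope.

(* Place the transmitter at the origin of the square lattice of mesh
   [s = C (2 + D)], the receiver at distance [C], and interferers on the
   lattice points of the square rings [max(|x|, |y|) = k s], [k = 1..K]; all
   separations are at least [s], as DC(C, D) demands.  Ring [k] has [8 k]
   points, each within [2 k s] of the receiver, so it contributes at least
   [8 P / ((1 + 2 s)^alpha k^(alpha - 1))] of interference and the SINR is at
   most [(1 + 2 s)^alpha / (8 (1 + C)^alpha)] divided by the partial zeta sum.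
   Rings up to [K] use [4 K (K + 1) <= m] points when [K = floor(sqrt(m/7) - 2)];
   the remaining points go far out on an axis.  For (b) and (c), a partial sum
   already beats [beta], and as [C, D -> 0] the gain factor tends to [1]. *)

Lemma sumR_app (l1 l2 : list R) : sumR (l1 ++ l2) = sumR l1 + sumR l2.
Proof. induction l1 as [|x l1 IH]; simpl; [lra|]. rewrite IH; lra. Qed.

Lemma sumR_map_lb {A} (g : A -> R) (l : list A) (c : R) :
  (forall x, In x l -> c <= g x) -> INR (length l) * c <= sumR (map g l).
Proof.
  induction l as [|x l IH]; intros Hc; [simpl; lra|].
  change (INR (S (length l)) * c <= g x + sumR (map g l)). rewrite S_INR.
  assert (c <= g x) by (apply Hc; left; reflexivity).
  assert (INR (length l) * c <= sumR (map g l)) by (apply IH; intros; apply Hc; right; auto).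
  lra.
Qed.

Lemma sumR_map_nonneg {A} (g : A -> R) (l : list A) :
  (forall x, In x l -> 0 <= g x) -> 0 <= sumR (map g l).
Proof. intros Hg. pose proof (sumR_map_lb g l 0 Hg). lra. Qed.

Definition cheb (u : Z * Z) : Z := Z.max (Z.abs (fst u)) (Z.abs (snd u)).

Definition side (k : nat) (g : Z -> Z * Z) : list (Z * Z) :=
  map (fun p => g (Z.of_nat p - Z.of_nat k)%Z) (seq 0 (2 * k)).

(* The boundary of [[-k, k]^2] as four half-open sides, so each corner occurs once. *)
Definition square_ring (k : nat) : list (Z * Z) :=
  let n := Z.of_nat k in
  side k (fun j => (j, n)) ++ side k (fun j => (n, - j)%Z) ++
  side k (fun j => (- j, - n)%Z) ++ side k (fun j => (- n, j)%Z).

Lemma in_side k g u :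
  In u (side k g) -> exists j, (- Z.of_nat k <= j < Z.of_nat k)%Z /\ u = g j.
Proof.
  unfold side. rewrite in_map_iff. intros [p [<- Hp]]. apply in_seq in Hp.
  exists (Z.of_nat p - Z.of_nat k)%Z. split; [lia | reflexivity].
Qed.

Lemma NoDup_side k g : (forall i j, g i = g j -> i = j) -> NoDup (side k g).
Proof.
  intros Hg. apply Injective_map_NoDup; [|apply seq_NoDup].
  intros p q E. apply Hg in E. lia.
Qed.

Lemma length_square_ring k : length (square_ring k) = (8 * k)%nat.
Proof. unfold square_ring, side. rewrite !length_app, !length_map, !length_seq. lia. Qed.

Ltac side_cases :=
  repeat match goal with
  | H : In _ (side _ _) |- _ =>
      apply in_side in H; destruct H as [? [? H]]; subst
  | H : In _ (_ ++ _) |- _ => apply in_app_iff in H; destruct H as [H | H]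
  end.

Lemma cheb_square_ring k u : In u (square_ring k) -> cheb u = Z.of_nat k.
Proof. unfold square_ring, cheb. intros H. side_cases; simpl; lia. Qed.

Lemma NoDup_square_ring k : NoDup (square_ring k).
Proof.
  unfold square_ring.
  repeat apply NoDup_app;
    try (apply NoDup_side; intros i j E; injection E; lia);
    intros u H1 H2; side_cases;
    match goal with E : (_, _) = (_, _) |- _ => injection E; lia end.
Qed.

Fixpoint square_rings (n : nat) : list (Z * Z) :=
  match n with
  | O => nil
  | S n' => square_rings n' ++ square_ring n
  end.

Lemma cheb_square_rings n u : In u (square_rings n) -> (1 <= cheb u <= Z.of_nat n)%Z.
Proof.
  induction n as [|n IH]; simpl; [tauto|].
  rewrite in_app_iff. intros [H | H].
  - specialize (IH H). lia.
  - apply cheb_square_ring in H. lia.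
Qed.

Lemma NoDup_square_rings n : NoDup (square_rings n).
Proof.
  induction n as [|n IH]; simpl; [constructor|].
  apply NoDup_app; [exact IH | apply NoDup_square_ring |].
  intros u H1 H2. apply cheb_square_rings in H1. apply cheb_square_ring in H2. lia.
Qed.

Lemma length_square_rings n : length (square_rings n) = (4 * n * (n + 1))%nat.
Proof.
  induction n as [|n IH]; simpl; [reflexivity|].
  rewrite length_app, IH, length_square_ring. lia.
Qed.

Definition lattice_config (K n : nat) : list (Z * Z) :=
  square_rings K ++ map (fun p => (Z.of_nat (K + 1 + p), 0%Z)) (seq 0 n).

Lemma NoDup_lattice_config K n : NoDup (lattice_config K n).
Proof.
  apply NoDup_app; [apply NoDup_square_rings | |].
  - apply Injective_map_NoDup; [intros p q E; injection E; lia | apply seq_NoDup].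
  - intros u H1 H2. apply cheb_square_rings in H1.
    apply in_map_iff in H2. destruct H2 as [p [<- _]]. unfold cheb in H1. simpl in H1. lia.
Qed.

Lemma length_lattice_config K n : length (lattice_config K n) = (4 * K * (K + 1) + n)%nat.
Proof.
  unfold lattice_config. rewrite length_app, length_square_rings, length_map, length_seq. lia.
Qed.

Definition grid (s : R) (u : Z * Z) : pt := (IZR (fst u) * s, IZR (snd u) * s).

Lemma dist2_refl p : dist2 p p = 0.
Proof. unfold dist2. replace (_ + _) with 0 by ring. apply sqrt_0. Qed.

Lemma grid_sep s u v : 0 < s -> u <> v -> s <= dist2 (grid s u) (grid s v).
Proof.
  intros Hs Huv. destruct u as [u1 u2], v as [v1 v2]. unfold dist2, grid; simpl.
  rewrite <- (sqrt_pow2 s) at 1 by lra. apply sqrt_le_1_alt.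
  assert (Hlat : (1 <= (u1 - v1) * (u1 - v1) + (u2 - v2) * (u2 - v2))%Z).
  { destruct (Z.eq_dec u1 v1), (Z.eq_dec u2 v2); [congruence | nia ..]. }
  apply IZR_le in Hlat. rewrite plus_IZR, !mult_IZR, !minus_IZR in Hlat.
  nra.
Qed.

Lemma grid_inj s : 0 < s -> Injective (grid s).
Proof.
  intros Hs u v E. apply NNPP. intros Huv.
  pose proof (grid_sep s u v Hs Huv) as H. rewrite E, dist2_refl in H. lra.
Qed.

Lemma dist2_grid_origin C s : 0 <= C -> dist2 (grid s (0%Z, 0%Z)) (C, 0) = C.
Proof.
  intros HC. unfold dist2, grid; simpl.
  replace (_ + _) with (C ^ 2) by ring. apply sqrt_pow2; lra.
Qed.

Lemma dist2_grid_receiver C s u : 0 <= C -> 2 * C <= s -> (1 <= cheb u)%Z ->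
  dist2 (grid s u) (C, 0) <= 2 * IZR (cheb u) * s.
Proof.
  intros HC HCs Hu. unfold dist2, grid, cheb in *; simpl.
  set (k := Z.max (Z.abs (fst u)) (Z.abs (snd u))) in *.
  assert (Hx : (- k <= fst u <= k)%Z) by lia.
  assert (Hy : (- k <= snd u <= k)%Z) by lia.
  apply IZR_le in Hu.
  destruct Hx as [Hx1 Hx2], Hy as [Hy1 Hy2]. apply IZR_le in Hx1, Hx2, Hy1, Hy2.
  rewrite opp_IZR in Hx1, Hy1.
  set (x := IZR (fst u)) in *. set (y := IZR (snd u)) in *. set (kk := IZR k) in *.
  rewrite <- (sqrt_pow2 (2 * kk * s)) by nra. apply sqrt_le_1_alt.
  assert (Hxs : Rabs (x * s - C) <= (kk + / 2) * s).
  { apply Rabs_le. split; nra. }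
  assert (Hys : Rabs (y * s) <= kk * s).
  { rewrite Rabs_mult, (Rabs_pos_eq s) by nra. apply Rmult_le_compat_r; [nra|].
    apply Rabs_le. lra. }
  assert ((x * s - C) ^ 2 <= ((kk + / 2) * s) ^ 2).
  { rewrite <- pow2_abs. apply pow_incr. split; [apply Rabs_pos | exact Hxs]. }
  assert ((y * s - 0) ^ 2 <= (kk * s) ^ 2).
  { rewrite Rminus_0_r, <- pow2_abs. apply pow_incr. split; [apply Rabs_pos | exact Hys]. }
  nra.
Qed.

Lemma Rpower_pos x y : 0 < Rpower x y.
Proof. apply exp_pos. Qed.

Lemma eta_pl_pos a d : 0 < eta_pl a d.
Proof. apply Rinv_0_lt_compat, Rpower_pos. Qed.

Lemma eta_pl_lb a d q : 0 <= a -> 0 <= d -> 1 + d <= q -> / Rpower q a <= eta_pl a d.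
Proof.
  intros Ha Hd Hq. apply Rinv_le_contravar; [apply Rpower_pos |].
  apply Rle_Rpower_l; lra.
Qed.

Lemma Rpower_div x y a : 0 < x -> 0 < y -> Rpower (x / y) a = Rpower x a / Rpower y a.
Proof.
  intros Hx Hy. unfold Rdiv.
  rewrite <- Rpower_mult_distr by (auto; apply Rinv_0_lt_compat; auto).
  f_equal. unfold Rpower. rewrite ln_Rinv, <- exp_Ropp by auto. f_equal; ring.
Qed.

Lemma Rpower_pred x a : 0 < x -> Rpower x a = Rpower x (a - 1) * x.
Proof.
  intros Hx. rewrite <- (Rpower_1 x) at 3 by exact Hx. rewrite <- Rpower_plus. f_equal; ring.
Qed.

Lemma zeta_part_S a n : zeta_part a (S n) = zeta_part a n + / Rpower (INR (S n)) (a - 1).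
Proof. unfold zeta_part. rewrite seq_S, map_app, sumR_app. simpl. ring. Qed.

Lemma zeta_part_le a m n : (m <= n)%nat -> zeta_part a m <= zeta_part a n.
Proof.
  induction 1 as [|n _ IH]; [lra|]. rewrite zeta_part_S.
  pose proof (Rinv_0_lt_compat _ (Rpower_pos (INR (S n)) (a - 1))). lra.
Qed.

Lemma zeta_part_pos a n : (1 <= n)%nat -> 0 < zeta_part a n.
Proof.
  intros Hn. apply Rlt_le_trans with (zeta_part a 1); [|apply zeta_part_le; exact Hn].
  rewrite zeta_part_S. unfold zeta_part at 1; simpl.
  pose proof (Rinv_0_lt_compat _ (Rpower_pos 1 (a - 1))). lra.
Qed.

Lemma Lim_seq_exceeds (u : nat -> R) (x : R) : Rbar_lt x (Lim_seq u) -> exists n, x < u n.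
Proof.
  intros Hx. apply NNPP. intros Hnone.
  assert (Hle : Rbar_le (Lim_seq u) (Lim_seq (fun _ => x))).
  { apply Lim_seq_le_loc. exists 0%nat. intros n _.
    apply Rnot_lt_le. intros Hn. apply Hnone. exists n; exact Hn. }
  rewrite Lim_seq_const in Hle. exact (Rbar_lt_not_le _ _ Hx Hle).
Qed.

Lemma sum_n_zeta_part a N :
  sum_n (fun n => / Rpower (INR (S n)) (a - 1)) N = zeta_part a (S N).
Proof.
  induction N as [|N IH].
  - rewrite sum_O. unfold zeta_part; simpl. ring.
  - rewrite sum_Sn, IH, (zeta_part_S a (S N)). reflexivity.
Qed.

(* If the series diverges, [zeta_inf a] is the junk value [0]; the argument
   goes through the limit in [Rbar] to cover that case too. *)
Lemma zeta_part_approx a B beta : 0 < beta -> B * / zeta_inf a < beta ->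
  exists K, 0 < zeta_part a K /\ B < beta * zeta_part a K.
Proof.
  intros Hb HB.
  set (L := Lim_seq (fun n => zeta_part a (S n))).
  assert (HL : zeta_inf a = real L).
  { unfold zeta_inf, Series, L. f_equal. apply Lim_seq_ext. apply sum_n_zeta_part. }
  assert (HL1 : Rbar_le (zeta_part a 1) L).
  { rewrite <- (Lim_seq_const (zeta_part a 1)). apply Lim_seq_le_loc.
    exists 0%nat. intros n _. apply zeta_part_le. lia. }
  assert (HZ1 := zeta_part_pos a 1 (le_n 1)).
  assert (Hlt : Rbar_lt (B / beta) L).
  { destruct L as [l | |]; simpl in HL, HL1 |- *; [|exact I | contradiction].
    rewrite HL in HB. apply Rlt_div_l; [exact Hb |].
    apply (Rmult_lt_reg_r (/ l)); [apply Rinv_0_lt_compat; lra |].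
    replace (l * beta * / l) with beta by (field; lra). exact HB. }
  destruct (Lim_seq_exceeds _ _ Hlt) as [n Hn].
  assert (HZ := zeta_part_pos a (S n) ltac:(lia)).
  exists (S n). split; [exact HZ |].
  apply Rlt_div_l in Hn; [lra | exact Hb].
Qed.

Definition interference (a P : R) (r : pt) (T : list pt) : R :=
  sumR (map (fun t' => P * eta_pl a (dist2 t' r)) T).

Lemma interference_app a P r T1 T2 :
  interference a P r (T1 ++ T2) = interference a P r T1 + interference a P r T2.
Proof. unfold interference. rewrite map_app. apply sumR_app. Qed.

Lemma interference_nonneg a P r T : 0 <= P -> 0 <= interference a P r T.
Proof.
  intros HP. apply sumR_map_nonneg. intros x _.
  apply Rmult_le_pos; [exact HP | apply Rlt_le, eta_pl_pos].
Qed.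

Section RingInterference.

Variables (a C s P : R).
Hypotheses (Ha : 0 <= a) (HC : 0 <= C) (HCs : 2 * C <= s) (HP : 0 < P).

Let A := Rpower (1 + 2 * s) a.

Lemma interference_square_ring k : (1 <= k)%nat ->
  8 * P / A * / Rpower (INR k) (a - 1)
  <= interference a P (C, 0) (map (grid s) (square_ring k)).
Proof.
  intros Hk.
  assert (Hk1 : 1 <= INR k) by (apply (le_INR 1); exact Hk).
  assert (HA : 0 < A) by apply Rpower_pos.
  assert (Hpt : forall x, In x (map (grid s) (square_ring k)) ->
            P * / (Rpower (INR k) a * A) <= P * eta_pl a (dist2 x (C, 0))).
  { intros x Hx. apply in_map_iff in Hx. destruct Hx as [u [<- Hu]].
    apply cheb_square_ring in Hu.
    assert (Hd := dist2_grid_receiver C s u HC HCs ltac:(lia)).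
    rewrite Hu, <- INR_IZR_INZ in Hd.
    apply Rmult_le_compat_l; [lra |]. unfold A.
    rewrite Rpower_mult_distr by lra.
    apply eta_pl_lb; [exact Ha | apply sqrt_pos | nra]. }
  pose proof (sumR_map_lb _ _ _ Hpt) as Hsum.
  rewrite length_map, length_square_ring, mult_INR, (Rpower_pred (INR k) a) in Hsum by lra.
  unfold interference.
  replace (8 * P / A * / Rpower (INR k) (a - 1))
    with (INR 8 * INR k * (P * / (Rpower (INR k) (a - 1) * INR k * A))).
  - exact Hsum.
  - pose proof (Rpower_pos (INR k) (a - 1)). simpl. field. lra.
Qed.

Lemma interference_square_rings K :
  8 * P / A * zeta_part a K <= interference a P (C, 0) (map (grid s) (square_rings K)).
Proof.
  induction K as [|K IH].
  - unfold zeta_part, interference. simpl. lra.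
  - simpl square_rings. rewrite map_app, interference_app, zeta_part_S.
    pose proof (interference_square_ring (S K) ltac:(lia)). lra.
Qed.

End RingInterference.

Lemma SINR_interference t r T P No a :
  SINR t r T P No (eta_pl a) = P * eta_pl a (dist2 t r) / (No + interference a P r T).
Proof. reflexivity. Qed.

Lemma SINR_nonneg t r T P No a : 0 < No -> 0 <= P -> 0 <= SINR t r T P No (eta_pl a).
Proof.
  intros HNo HP. rewrite SINR_interference.
  pose proof (interference_nonneg a P r T HP). pose proof (eta_pl_pos a (dist2 t r)).
  apply Rdiv_le_0_compat; [apply Rmult_le_pos |]; lra.
Qed.

Lemma lattice_config_SINR No a C D m K :
  0 < No -> 0 <= a -> 0 < C -> 0 < D -> (4 * K * (K + 1) <= m)%nat ->
  exists (t r : pt) (T : list pt),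
    NoDup T /\ length T = m /\ DC C D t r T /\
    forall P, 0 < P ->
      SINR t r T P No (eta_pl a) * zeta_part a K
      <= / 8 * Rpower ((1 + 2 * C * (2 + D)) / (1 + C)) a.
Proof.
  intros HNo Ha HC HD Hm.
  set (s := C * (2 + D)). assert (Hs : 0 < s) by (unfold s; nra).
  set (L := lattice_config K (m - 4 * K * (K + 1))).
  exists (grid s (0%Z, 0%Z)), (C, 0), (map (grid s) L).
  split; [|split; [|split]].
  - apply Injective_map_NoDup; [apply grid_inj, Hs | apply NoDup_lattice_config].
  - unfold L. rewrite length_map, length_lattice_config. lia.
  - split; [rewrite dist2_grid_origin; lra |].
    intros x y Hx Hy Hxy.
    assert (Hgrid : forall z, In z (grid s (0%Z, 0%Z) :: map (grid s) L) -> exists u, z = grid s u).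
    { intros z [<- | Hz]; [eauto |]. apply in_map_iff in Hz. destruct Hz as [u [<- _]]. eauto. }
    destruct (Hgrid x Hx) as [u ->], (Hgrid y Hy) as [v ->].
    apply grid_sep; [exact Hs | congruence].
  - intros P HP.
    set (A := Rpower (1 + 2 * s) a). assert (HA : 0 < A) by apply Rpower_pos.
    set (E := Rpower (1 + C) a). assert (HE : 0 < E) by apply Rpower_pos.
    set (Z := zeta_part a K). assert (HZ : 0 <= Z) by (apply zeta_part_le with (m := 0%nat); lia).
    set (I := interference a P (C, 0) (map (grid s) L)).
    assert (HI : 8 * P / A * Z <= I).
    { unfold I, L, lattice_config, A, Z. rewrite map_app, interference_app.
      pose proof (interference_square_rings a C s P Ha (Rlt_le _ _ HC) ltac:(unfold s; nra) HP K).
      pose proof (interference_nonneg a P (C, 0)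
        (map (grid s) (map (fun p => (Z.of_nat (K + 1 + p), 0%Z)) (seq 0 (m - 4 * K * (K + 1)))))
        (Rlt_le _ _ HP)).
      lra. }
    assert (Hsignal : P * eta_pl a (dist2 (grid s (0%Z, 0%Z)) (C, 0)) = P / E).
    { rewrite dist2_grid_origin by lra. reflexivity. }
    assert (HPZ : 8 * (P * Z) <= A * (No + I)).
    { apply Rmult_le_compat_l with (r := A) in HI; [|lra].
      replace (A * (8 * P / A * Z)) with (8 * (P * Z)) in HI by (field; lra).
      assert (0 <= A * No) by (apply Rmult_le_pos; lra).
      rewrite Rmult_plus_distr_l. lra. }
    assert (HNI : 0 < No + I) by (pose proof (Rmult_le_pos (8 * P / A) Z ltac:(
      apply Rmult_le_pos; [lra | apply Rlt_le, Rinv_0_lt_compat, HA]) HZ); lra).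
    rewrite SINR_interference, Hsignal. fold I.
    replace (1 + 2 * C * (2 + D)) with (1 + 2 * s) by (unfold s; ring).
    rewrite Rpower_div by lra. fold A E.
    replace (P / E / (No + I) * Z) with (P * Z / (No + I) / E) by (field; lra).
    replace (/ 8 * (A / E)) with (A / 8 / E) by (field; lra).
    apply Rmult_le_compat_r; [apply Rlt_le, Rinv_0_lt_compat, HE |].
    apply Rle_div_l; [exact HNI | lra].
Qed.

Lemma Kbound_fits m : (4 * Kbound m * (Kbound m + 1) <= m)%nat.
Proof.
  unfold Kbound. set (x := sqrt (INR m / 7) - 2).
  destruct (base_Int_part x) as [Hfl _].
  destruct (Z_le_gt_dec 0 (Int_part x)) as [Hx | Hx]; [|replace (Z.to_nat _) with 0%nat by lia; lia].
  set (K := Z.to_nat (Int_part x)).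
  assert (HK : INR K = IZR (Int_part x)) by (unfold K; rewrite INR_IZR_INZ, Z2Nat.id; auto).
  assert (HK0 := pos_INR K).
  assert (Hm : 0 <= INR m / 7) by (pose proof (pos_INR m); lra).
  assert (Hsq : (INR K + 2) * (INR K + 2) <= INR m / 7).
  { rewrite <- (sqrt_sqrt (INR m / 7)) by exact Hm.
    assert (Ex : sqrt (INR m / 7) = x + 2) by (unfold x; ring).
    assert (INR K + 2 <= sqrt (INR m / 7)) by lra.
    apply Rmult_le_compat; lra. }
  apply INR_le. rewrite !mult_INR, plus_INR. simpl (INR 4). simpl (INR 1). nra.
Qed.

Lemma Kbound_ge K : (K <= Kbound (7 * (K + 3) * (K + 3)))%nat.
Proof.
  unfold Kbound.
  assert (HK := pos_INR K).
  replace (sqrt (INR (7 * (K + 3) * (K + 3)) / 7) - 2) with (INR K + 1).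
  - destruct (base_Int_part (INR K + 1)) as [_ Hfl].
    assert (H : IZR (Z.of_nat K) < IZR (Int_part (INR K + 1))) by (rewrite <- INR_IZR_INZ; lra).
    apply lt_IZR in H. lia.
  - replace (INR (7 * (K + 3) * (K + 3)) / 7) with ((INR K + 3) ^ 2).
    + rewrite sqrt_pow2; lra.
    + rewrite !mult_INR, plus_INR. simpl (INR 7). simpl (INR 3). field.
Qed.

Lemma Rpower_gain_small a g : 0 < a -> 1 < g ->
  exists eps, 0 < eps /\ forall C D, 0 < C -> C < eps -> 0 < D -> D < eps ->
    Rpower ((1 + 2 * C * (2 + D)) / (1 + C)) a < g.
Proof.
  intros Ha Hg.
  assert (Hlg : 0 < ln g) by (rewrite <- ln_1; apply ln_increasing; lra).
  exists (Rmin 1 (ln g / (6 * a))). split.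
  { apply Rmin_glb_lt; [lra | apply Rdiv_lt_0_compat; lra]. }
  intros C D HC HCe HD HDe.
  assert (HC6 : 6 * a * C < ln g).
  { assert (HCe' : C < ln g / (6 * a)) by (pose proof (Rmin_r 1 (ln g / (6 * a))); lra).
    apply (Rmult_lt_compat_l (6 * a)) in HCe'; [|lra].
    replace (6 * a * (ln g / (6 * a))) with (ln g) in HCe' by (field; lra). exact HCe'. }
  assert (HD1 : D < 1) by (pose proof (Rmin_l 1 (ln g / (6 * a))); lra).
  set (d := 2 * C * (2 + D)).
  assert (Hd : 0 < d < 6 * C) by (unfold d; split; nra).
  apply Rle_lt_trans with (Rpower (exp d) a).
  - apply Rle_Rpower_l; [lra | split; [apply Rdiv_lt_0_compat; lra |]].
    apply Rle_trans with (1 + d); [|apply exp_ineq1_le].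
    apply Rle_div_l; [lra | nra].
  - unfold Rpower. rewrite ln_exp, <- (exp_ln g) by lra. apply exp_increasing. nra.
Qed.

Lemma not_ensures_SINR_of_config C D beta No eta t r T :
  NoDup T -> DC C D t r T -> (forall P, 0 < P -> SINR t r T P No eta < beta) ->
  ~ ensures_SINR C D beta No eta.
Proof.
  intros HT HDC Hlow [P [HP Hens]].
  specialize (Hens t r T HT HDC). specialize (Hlow P HP). lra.
Qed.

Lemma lattice_config_SINR_lt No a C D beta K :
  0 < No -> 0 <= a -> 0 < C -> 0 < D -> 0 < zeta_part a K ->
  / 7 * Rpower ((1 + 2 * C * (2 + D)) / (1 + C)) a < beta * zeta_part a K ->
  exists (t r : pt) (T : list pt),
    NoDup T /\ DC C D t r T /\ forall P, 0 < P -> SINR t r T P No (eta_pl a) < beta.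
Proof.
  intros HNo Ha HC HD HZ Hbeta.
  set (m := (7 * (K + 3) * (K + 3))%nat).
  destruct (lattice_config_SINR No a C D m (Kbound m) HNo Ha HC HD (Kbound_fits m))
    as [t [r [T [HT [_ [HDC Hbound]]]]]].
  exists t, r, T. split; [exact HT | split; [exact HDC |]].
  intros P HP. specialize (Hbound P HP).
  set (B := Rpower ((1 + 2 * C * (2 + D)) / (1 + C)) a) in *.
  assert (HB : 0 < B) by apply Rpower_pos.
  assert (HZm : zeta_part a K <= zeta_part a (Kbound m)) by (apply zeta_part_le, Kbound_ge).
  assert (HS := SINR_nonneg t r T P No a HNo (Rlt_le _ _ HP)).
  apply (Rmult_lt_reg_r (zeta_part a K)); [exact HZ |].
  apply Rle_lt_trans with (SINR t r T P No (eta_pl a) * zeta_part a (Kbound m)).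
  - apply Rmult_le_compat_l; assumption.
  - lra.
Qed.

Theorem lemma3 (No alpha : R) (HNo : 0 < No) (Halpha : 2 < alpha) :
  (* (a) *)
  (forall (C D : R) (m : nat), 0 < C -> 0 < D -> (0 < m)%nat ->
     exists (t r : pt) (T : list pt),
       NoDup T /\ length T = m /\ DC C D t r T /\
       forall P, 0 < P ->
         SINR t r T P No (eta_pl alpha) * zeta_part alpha (Kbound m)
         <= / 7 * Rpower ((1 + 2 * C * (2 + D)) / (1 + C)) alpha)
  /\
  (* (b) *)
  (forall (C D beta : R), 0 < C -> 0 < D -> 0 < beta ->
     / 7 * Rpower ((1 + 2 * C * (2 + D)) / (1 + C)) alpha * / zeta_inf alpha < beta ->
     ~ ensures_SINR C D beta No (eta_pl alpha) /\
     exists (t r : pt) (T : list pt),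
       NoDup T /\ DC C D t r T /\
       forall P, 0 < P -> SINR t r T P No (eta_pl alpha) < beta)
  /\
  (* (c) *)
  (forall beta : R, 0 < beta -> / 7 * / zeta_inf alpha < beta ->
     exists eps : R, 0 < eps /\
       forall C D : R, 0 < C -> C < eps -> 0 < D -> D < eps ->
         ~ ensures_SINR C D beta No (eta_pl alpha)).
Proof.
  assert (Ha : 0 <= alpha) by lra.
  split; [|split].
  - intros C D m HC HD _.
    destruct (lattice_config_SINR No alpha C D m (Kbound m) HNo Ha HC HD (Kbound_fits m))
      as [t [r [T [HT [Hlen [HDC Hbound]]]]]].
    exists t, r, T. split; [|split; [|split]]; [assumption .. |].
    intros P HP. specialize (Hbound P HP).
    pose proof (Rpower_pos ((1 + 2 * C * (2 + D)) / (1 + C)) alpha). lra.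
  - intros C D beta HC HD Hb Hbeta.
    destruct (zeta_part_approx alpha _ beta Hb Hbeta) as [K [HZ HK]].
    destruct (lattice_config_SINR_lt No alpha C D beta K HNo Ha HC HD HZ HK)
      as [t [r [T [HT [HDC Hlow]]]]].
    split; [exact (not_ensures_SINR_of_config _ _ _ _ _ _ _ _ HT HDC Hlow) |].
    exists t, r, T. auto.
  - intros beta Hb Hbeta.
    destruct (zeta_part_approx alpha _ beta Hb Hbeta) as [K [HZ HK]].
    destruct (Rpower_gain_small alpha (7 * beta * zeta_part alpha K) ltac:(lra) ltac:(lra))
      as [eps [Heps Hgain]].
    exists eps. split; [exact Heps |].
    intros C D HC HCe HD HDe.
    specialize (Hgain C D HC HCe HD HDe).
    destruct (lattice_config_SINR_lt No alpha C D beta K HNo Ha HC HD HZ ltac:(lra))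
      as [t [r [T [HT [HDC Hlow]]]]].
    exact (not_ensures_SINR_of_config _ _ _ _ _ _ _ _ HT HDC Hlow).
Qed.
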